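(* Let $\mathbb{A}$ be an alphabet, let $WW'$ be an almost-square over $\mathbb{A}$ (with $W'$ either an extension of $W$ or obtained from $W$ by deleting one letter), and let $V$ be a word over $\mathbb{A}$ such that $WW'V=XX'$ where $XX'$ is an almost-square (with $X'$ either an extension of $X$ or obtained from $X$ by deleting one letter). If $4\leq |V|\leq \frac{1}{2}|W|$, then $XX'$ is not square-free.
   Context: Words are finite sequences of letters; $|U|$ denotes the length of $U$. An extension of a word $W$ over $\mathbb{A}$ is a word $W_1xW_2$ with $W=W_1W_2$ ($W_1,W_2$ possibly empty) and $x\in\mathbb{A}$. An almost-square is a word of the form $WW'$ where $W'$ is either an extension of $W$ or is obtained by deleting one letter from $W$. A square is a nonempty word of the form $YY$; a word is square-free if none of its factors (contiguous subwords) is a square. *)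

From mathcomp Require Import all_boot.
Set Implicit Arguments. Unset Strict Implicit. Unset Printing Implicit Defensive.

Definition extension {A : Type} (W W' : seq A) : Prop :=
  exists (W1 W2 : seq A) (x : A), W = W1 ++ W2 /\ W' = W1 ++ x :: W2.

Definition deletion {A : Type} (W W' : seq A) : Prop :=
  exists (W1 W2 : seq A) (x : A), W = W1 ++ x :: W2 /\ W' = W1 ++ W2.

Definition almost_square_pair {A : Type} (W W' : seq A) : Prop :=
  extension W W' \/ deletion W W'.

Definition square_free {A : Type} (U : seq A) : Prop :=
  forall (P Y S : seq A), Y <> [::] -> U <> P ++ (Y ++ Y) ++ S.

(* An almost-square W W' splits into two blocks that recur at distance |W| and
   |W'| = |W| +- 1 respectively; likewise X X' yields blocks recurring at
   distance |X| and |X'| = |X| +- 1.  Since |W W' V| = |X X'|, the length |X|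
   exceeds |W| by about |V|/2, so some W-recurrence and some X-recurrence have
   distances p1 < p2 with p2 - p1 small.  When |V| <= |W|/2 the two recurring
   blocks can be chosen to overlap on a window of length p2 - p1, and reading
   that window at offsets p1 and p2 exhibits a square. *)

From mathcomp Require Import all_boot.
From mathcomp Require Import zify.

Set Implicit Arguments.
Unset Strict Implicit.
Unset Printing Implicit Defensive.

Section Recurrence.

Variable T : Type.
Implicit Types U P Q S : seq T.

Definition factor U (i l : nat) : seq T := take l (drop i U).

Definition recurs U (p i l : nat) : Prop := factor U i l = factor U (i + p) l.

Lemma factor_cat_mid P Q S : factor (P ++ Q ++ S) (size P) (size Q) = Q.
Proof. by rewrite /factor drop_size_cat // take_size_cat. Qed.

Lemma factor_factor U i l j k :
  j + k <= l -> factor (factor U i l) j k = factor U (i + j) k.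
Proof.
move=> le_jk_l; rewrite /factor take_drop take_takel; last by rewrite addnC.
by rewrite -take_drop drop_drop addnC.
Qed.

Lemma recurs_sub U p i l j k :
  recurs U p i l -> i <= j -> j + k <= i + l -> recurs U p j k.
Proof.
move=> rec le_ij le_kl; rewrite /recurs.
have -> : j = i + (j - i) by rewrite subnKC.
have le_k : j - i + k <= l by lia.
by rewrite addnAC -(factor_factor U i le_k) -(factor_factor U (i + p) le_k) rec.
Qed.

Lemma recurs_square U k p :
  0 < p -> k + 2 * p <= size U -> recurs U p k p -> ~ square_free U.
Proof.
move=> p_gt0 le_U rec sqf.
have size_fac : size (factor U k p) = p by rewrite size_takel // size_drop; lia.
apply: (sqf (take k U) (factor U k p) (drop (k + 2 * p) U)).
  by move=> fac0; rewrite fac0 /= in size_fac; lia.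
rewrite {2}rec /factor addnC -drop_drop -takeD addnn -mul2n [k + _]addnC.
by rewrite -drop_drop !cat_take_drop.
Qed.

Definition recurrences_overlap (L p1 i1 l1 p2 i2 l2 : nat) : Prop :=
  [/\ p1 < p2, maxn i1 i2 + (p2 - p1) <= i1 + l1,
      maxn i1 i2 + (p2 - p1) <= i2 + l2
    & maxn i1 i2 + p2 + (p2 - p1) <= L].

(* With [lo := maxn i1 i2], the factor of length [p2 - p1] at [lo + p1] equals
   the one at [lo] by the first recurrence, hence the one at [lo + p2] by the
   second. *)
Lemma recurrences_overlap_square U p1 i1 l1 p2 i2 l2 :
  recurs U p1 i1 l1 -> recurs U p2 i2 l2 ->
  recurrences_overlap (size U) p1 i1 l1 p2 i2 l2 -> ~ square_free U.
Proof.
move=> rec1 rec2 [lt_p12 le1 le2 leU].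
set lo := maxn i1 i2 in le1 le2 leU.
have rec1' := recurs_sub rec1 (leq_maxl i1 i2) le1.
have rec2' := recurs_sub rec2 (leq_maxr i1 i2) le2.
apply: (@recurs_square U (lo + p1) (p2 - p1)); [lia | lia |].
rewrite /recurs -rec1' rec2'; congr factor; lia.
Qed.

Lemma recurs_repeat U P Q M S p i l :
  U = P ++ Q ++ M ++ Q ++ S -> p = size Q + size M -> i = size P -> l = size Q ->
  recurs U p i l.
Proof.
move=> -> -> -> ->; rewrite /recurs factor_cat_mid.
have -> : P ++ Q ++ M ++ Q ++ S = (P ++ Q ++ M) ++ Q ++ S by rewrite -!catA.
by rewrite -!size_cat factor_cat_mid.
Qed.

Lemma almost_square_recurs W W' R (U := W ++ W' ++ R) :
  almost_square_pair W W' ->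
  exists a a',
    [/\ a <= a' <= size W, recurs U (size W) 0 a,
        recurs U (size W') a' (size W - a') &
        (a' = a /\ size W' = (size W).+1) \/
        (a' = a.+1 /\ (size W').+1 = size W)].
Proof.
rewrite /U; case=> [[W1 [W2 [x [-> ->]]]]|[W1 [W2 [x [-> ->]]]]];
  rewrite -!catA /=.
- exists (size W1), (size W1); split; rewrite ?size_cat /=; try lia.
  + by apply: (recurs_repeat (P := [::]) (Q := W1) (M := W2)); rewrite ?size_cat.
  + apply: (recurs_repeat (P := W1) (Q := W2) (M := W1 ++ [:: x]));
      by rewrite -?catA //= ?size_cat /=; lia.
- exists (size W1), (size W1).+1; split; rewrite ?size_cat /=; try lia.
  + by apply: (recurs_repeat (P := [::]) (Q := W1) (M := x :: W2)); rewrite ?size_cat.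
  + apply: (recurs_repeat (P := W1 ++ [:: x]) (Q := W2) (M := W1));
      by rewrite -?catA //= ?size_cat /=; lia.
Qed.

End Recurrence.

(* [n], [w] are |W|, |W'| with recurrences (n, 0, a) and (w, a', n - a');
   [m], [x] are |X|, |X'| with recurrences (m, 0, b) and (x, b', m - b'). *)
Lemma almost_square_recurrences_overlap (n w a a' m x b b' v L : nat) :
  3 < v -> 2 * v <= n -> a <= a' <= n -> b <= b' <= m ->
  L = n + w + v -> L = m + x ->
  (a' = a /\ w = n.+1) \/ (a' = a.+1 /\ w.+1 = n) ->
  (b' = b /\ x = m.+1) \/ (b' = b.+1 /\ x.+1 = m) ->
  [\/ recurrences_overlap L n 0 a m 0 b,
      recurrences_overlap L n 0 a x b' (m - b'),
      recurrences_overlap L w a' (n - a') m 0 b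
    | recurrences_overlap L w a' (n - a') x b' (m - b')].
Proof.
rewrite /recurrences_overlap => v_gt3 le_vn le_a le_b -> Lm shapeW shapeX.
have [prefixes|not_prefixes] := boolP ((m - n <= a) && (m - n <= b)).
  by apply: Or41; split; case: shapeW; case: shapeX; lia.
have [suffixes|not_suffixes] := boolP (maxn a' b' + (x - w) <= n).
  by apply: Or44; split; case: shapeW; case: shapeX; lia.
have [short_b|long_b] := boolP (b < m - n).
  by apply: Or42; split; case: shapeW; case: shapeX; lia.
by apply: Or43; split; case: shapeW; case: shapeX; lia.
Qed.

Theorem mainTheorem5 (A : Type) (W W' V X X' : seq A) :
  almost_square_pair W W' ->
  almost_square_pair X X' ->
  W ++ W' ++ V = X ++ X' ->
  4 <= size V -> 2 * size V <= size W ->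
  ~ square_free (X ++ X').
Proof.
move=> sqW sqX eqU le_4V le_VW.
have [a [a' [le_a recW1 recW2 shapeW]]] := almost_square_recurs V sqW.
have [b [b' [le_b recX1 recX2 shapeX]]] := almost_square_recurs [::] sqX.
rewrite cats0 -eqU in recX1 recX2; rewrite -eqU.
have sizeW : size (W ++ W' ++ V) = size W + size W' + size V by rewrite !size_cat addnA.
have sizeX : size (W ++ W' ++ V) = size X + size X' by rewrite eqU size_cat.
have := almost_square_recurrences_overlap le_4V le_VW le_a le_b sizeW sizeX shapeW shapeX.
case=> ov; exact: recurrences_overlap_square ov.
Qed.
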